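(* Let $p\in\mathbb{T}^{\mathcal{P}([n])}$ be a tropical Wick vector with nonempty support, and let $M$ be the even $\Delta$-matroid whose collection of bases is $\operatorname{supp}(p)$. Then: (i) if $x\in\mathcal{C}(p)^\top$ has nonempty support, then $\operatorname{supp}(x)$ is a dependent subset in $M^*$; (ii) the cocycles of $p$ having minimal nonempty support (with respect to inclusion) are exactly the cocircuits of $p$; (iii) for any two cocircuits $c^*_1,c^*_2$ of $p$ with the same support there is $\lambda\in\mathbb{R}$ with $c^*_1=c^*_2+\lambda\mathbf{1}$.
   Context: $\mathbb{T}=\mathbb{R}\cup\{\infty\}$; $\mathcal{P}([n])$ the set of subsets of $[n]$. A tropical Wick vector is $p\in\mathbb{T}^{\mathcal{P}([n])}$ such that for all $S,T\subseteq[n]$ the minimum $\min_{i\in S\Delta T}(p_{S\Delta\{i\}}+p_{T\Delta\{i\}})$ is attained at least twice or equals $\infty$; $\operatorname{supp}(p)=\{S:p_S\ne\infty\}$, which (when nonempty) is the set of bases of an even $\Delta$-matroid $M$ on $[n]$. The dual $M^*$ has bases $\{[n]\setminus B: B \text{ a basis of } M\}$. Let $\mathcal{J}=\{1,\dots,n,1^*,\dots,n^*\}$ with involution $i\leftrightarrow i^*$ ($i^{**}=i$); $X\subseteq\mathcal{J}$ is admissible if $X\cap X^*=\emptyset$. For $S\subseteq[n]$ let $\bar S=S\cup\{i^*:i\in[n]\setminus S\}$, and $\bar p_{\bar S}:=p_S$. A subset $X\subseteq\mathcal{J}$ is dependent in $M^*$ if it is not contained in $\bar B$ for any basis $B$ of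 $M^*$. For $T\subseteq[n]$ define $c_T, c^*_T\in\mathbb{T}^{\mathcal{J}}$ by $(c_T)_i=\bar p_{\bar T\Delta\{i,i^*\}}$ if $i\in\bar T$, $\infty$ otherwise; $(c^*_T)_i=\bar p_{\bar T\Delta\{i,i^*\}}$ if $i\notin\bar T$, $\infty$ otherwise. Circuits of $p$: vectors $c_T+\lambda\mathbf{1}$, $\lambda\in\mathbb{R}$, with nonempty support; $\mathcal{C}(p)$ is the set of circuits. Cocircuits of $p$: vectors $c^*_T+\lambda\mathbf{1}$ with nonempty support. Here the support of a vector in $\mathbb{T}^{\mathcal{J}}$ is the set of coordinates $\neq\infty$. $x,y$ are tropically orthogonal if $\min_k(x_k+y_k)$ is attained at least twice or equals $\infty$; $\mathcal{C}(p)^\top$ is the set of vectors tropically orthogonal to all circuits. A vector is admissible if its support is admissible; a cocycle of $p$ is an admissible vector in $\mathcal{C}(p)^\top$. *)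

From HB Require Import structures.
From mathcomp Require Import all_boot all_order all_algebra.
From mathcomp Require Import reals.
Set Implicit Arguments. Unset Strict Implicit. Unset Printing Implicit Defensive.
Import Order.TTheory GRing.Theory Num.Theory.
Local Open Scope ring_scope.

(* Tropical numbers T = R ∪ {∞}: [Some a] is the real a, [None] is ∞. *)
Definition trop (R : realType) := option R.

(* tropical product (= ordinary sum, ∞ absorbing) *)
Definition tadd (R : realType) (a b : trop R) : trop R :=
  match a, b with Some x, Some y => Some (x + y) | _, _ => None end.

Definition min_twice_or_inf (R : realType) (I : finType) (P : pred I)
    (f : I -> trop R) : Prop :=
  (forall i, P i -> f i = None) \/
  exists i j (m : R), [/\ i != j, P i & P j] /\ f i = Some m /\ f j = Some m /\
    forall k, P k -> match f k with Some a => m <= a | None => true end.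

Definition symd (T : finType) (A B : {set T}) : {set T} := (A :\: B) :|: (B :\: A).

Definition wick (R : realType) (n : nat) (p : {ffun {set 'I_n} -> trop R}) : Prop :=
  forall A B : {set 'I_n},
    min_twice_or_inf (fun i => i \in symd A B)
      (fun i => tadd (p (symd A [set i])) (p (symd B [set i]))).

Definition supp_p (R : realType) (n : nat) (p : {ffun {set 'I_n} -> trop R}) :
  {set {set 'I_n}} := [set A | p A != None].

(* J = {1..n, 1*..n*}: [inl i] is i, [inr i] is i*. *)
Definition J (n : nat) : finType := ('I_n + 'I_n)%type.
Definition star (n : nat) (j : J n) : J n :=
  match j with inl i => inr i | inr i => inl i end.
Definition base (n : nat) (j : J n) : 'I_n := match j with inl i | inr i => i end.

Definition admissible (n : nat) (X : {set J n}) : Prop :=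
  forall j, j \in X -> star j \notin X.

Definition bar (n : nat) (A : {set 'I_n}) : {set J n} :=
  [set j : J n | match j with inl i => i \in A | inr i => i \notin A end].

(* bar p_{bar S} := p_S (and ∞ on subsets of J not of the form bar S,
   which never occur below) *)
Definition barp (R : realType) (n : nat) (p : {ffun {set 'I_n} -> trop R})
    (X : {set J n}) : trop R :=
  match [pick A | X == bar A] with Some A => p A | None => None end.

Definition tvec (R : realType) (n : nat) := {ffun J n -> trop R}.

Definition tsupp (R : realType) (n : nat) (x : tvec R n) : {set J n} :=
  [set j | x j != None].

Definition shift (R : realType) (n : nat) (x : tvec R n) (l : R) : tvec R n :=
  [ffun j => tadd (x j) (Some l)].

Definition cT (R : realType) (n : nat) (p : {ffun {set 'I_n} -> trop R})
    (A : {set 'I_n}) : tvec R n :=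
  [ffun j => if j \in bar A then barp p (symd (bar A) [set j; star j]) else None].

Definition cTstar (R : realType) (n : nat) (p : {ffun {set 'I_n} -> trop R})
    (A : {set 'I_n}) : tvec R n :=
  [ffun j => if j \notin bar A then barp p (symd (bar A) [set j; star j]) else None].

Definition circuit (R : realType) (n : nat) (p : {ffun {set 'I_n} -> trop R})
    (x : tvec R n) : Prop :=
  (exists (A : {set 'I_n}) (l : R), x = shift (cT p A) l) /\ tsupp x != set0.

Definition cocircuit (R : realType) (n : nat) (p : {ffun {set 'I_n} -> trop R})
    (x : tvec R n) : Prop :=
  (exists (A : {set 'I_n}) (l : R), x = shift (cTstar p A) l) /\ tsupp x != set0.

Definition torth (R : realType) (n : nat) (x y : tvec R n) : Prop :=
  min_twice_or_inf predT (fun k => tadd (x k) (y k)).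

Definition in_Cperp (R : realType) (n : nat) (p : {ffun {set 'I_n} -> trop R})
    (x : tvec R n) : Prop :=
  forall c, circuit p c -> torth x c.

Definition cocycle (R : realType) (n : nat) (p : {ffun {set 'I_n} -> trop R})
    (x : tvec R n) : Prop :=
  admissible (tsupp x) /\ in_Cperp p x.

(* X ⊆ J is dependent in M^*, where the bases of M are supp p and the bases of
   M^* are the complements [n] \ B of bases B of M *)
Definition dependent_dual (R : realType) (n : nat) (p : {ffun {set 'I_n} -> trop R})
    (X : {set J n}) : Prop :=
  forall B : {set 'I_n}, B \in supp_p p -> ~ (X \subset bar (~: B)).

From HB Require Import structures.
From mathcomp Require Import all_boot all_order all_algebra.
From mathcomp Require Import reals.
From mathcomp Require Import lra.
Local Open Scope ring_scope.
Set Implicit Arguments. Unset Strict Implicit. Unset Printing Implicit Defensive.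
Import Order.TTheory GRing.Theory Num.Theory.

(* Entry j of c_A is p at A toggled in the index of j, and c_A lives on bar A
   while c*_A lives off it.  Hence a circuit meeting supp x in a single
   coordinate cannot be orthogonal to x; taking c_{B Δ {i}} for a basis B whose
   dual contains supp x gives (i).  A vector of C(p)^⊤ with the support of c*_A
   is orthogonal to the circuits c_{A Δ {i,k}}, which meet it in exactly two
   coordinates, so it is a translate of c*_A; this gives (iii).  For (ii),
   cocircuits are cocycles by the Wick relations and are minimal by (i); a
   minimal cocycle x contains the support of c*_{B Δ {i}}, for B a basis
   minimising |supp x ∩ bar B| and i in that intersection, hence has the same
   support and is a translate of that cocircuit. *)

Section MinTwiceOrInf.
Variables (R : realType) (I : finType) (P : pred I).

Lemma min_twice_or_inf_supp1 (f : I -> trop R) j :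
  P j -> (forall k, P k -> k != j -> f k = None) ->
  min_twice_or_inf P f -> f j = None.
Proof.
move=> Pj offj [->//|[i [k [m [[nik Pi Pk] [fi [fk _]]]]]]].
have onj l : P l -> f l != None -> l = j.
  by move=> Pl; apply: contraNeq => /(offj l Pl) ->.
by move: nik; rewrite (onj i Pi) ?fi // (onj k Pk) ?fk ?eqxx.
Qed.

Lemma min_twice_or_inf_supp2 (f : I -> trop R) j1 j2 :
  j1 != j2 -> P j1 -> P j2 ->
  (forall k, P k -> k != j1 -> k != j2 -> f k = None) ->
  min_twice_or_inf P f -> f j1 = f j2.
Proof.
move=> j12 Pj1 Pj2 off [h|[i [j [m [[nij Pi Pj] [fi [fj _]]]]]]].
  by rewrite !h.
have on12 l : P l -> f l = Some m -> (l == j1) || (l == j2).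
  by move=> Pl; apply: contraPT => /norP[l1 l2]; rewrite off.
have /orP[] := on12 i Pi fi; have /orP[] := on12 j Pj fj;
  by move=> /eqP ej /eqP ei; subst; rewrite ?eqxx in nij *; rewrite ?fi ?fj.
Qed.

Lemma min_twice_or_inf_reindex (K : finType) (g : I -> trop R) (f : K -> trop R)
    (phi : I -> K) (psi : K -> I) (c : R) :
  {in P, cancel phi psi} ->
  (forall i, P i -> f (phi i) = tadd (g i) (Some c)) ->
  (forall k, f k != None -> P (psi k) /\ k = phi (psi k)) ->
  min_twice_or_inf P g -> min_twice_or_inf predT f.
Proof.
move=> phiK fE onf [g0|[i [j [m [[nij Pi Pj] [gi [gj gmin]]]]]]].
  left=> k _; case fk: (f k) => [a|] //.
  have /onf[Pk ek] : f k != None by rewrite fk.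
  by move: fk; rewrite ek fE // g0.
right; exists (phi i), (phi j), (m + c); split; first split => //.
  by apply: contra nij => /eqP e; rewrite -(phiK i Pi) -(phiK j Pj) e.
split; first by rewrite fE // gi.
split; first by rewrite fE // gj.
move=> k _; case fk: (f k) => [a|] //.
have /onf[Pk ek] : f k != None by rewrite fk.
move: fk; rewrite ek fE //; move: (gmin _ Pk).
by case: (g (psi k)) => [b|] //= mb [<-]; rewrite lerD2r.
Qed.

End MinTwiceOrInf.

Lemma in_symd (T : finType) (A B : {set T}) x :
  (x \in symd A B) = (x \in A) (+) (x \in B).
Proof. by rewrite /symd !inE; case: (x \in A); case: (x \in B). Qed.

Section BarSets.
Variable n : nat.
Implicit Types (A B : {set 'I_n}) (i : 'I_n) (j k : J n).

Definition toggle A i := symd A [set i].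

Lemma in_toggle A i i' : (i' \in toggle A i) = (i' \in A) (+) (i' == i).
Proof. by rewrite /toggle in_symd inE. Qed.

Lemma toggleK A i : toggle (toggle A i) i = A.
Proof. by apply/setP=> i'; rewrite !in_toggle -addbA addbb addbF. Qed.

Lemma toggleC A i i' : toggle (toggle A i) i' = toggle (toggle A i') i.
Proof. by apply/setP=> m; rewrite !in_toggle -!addbA [(_ == i) (+) _]addbC. Qed.

Lemma in_bar A j :
  (j \in bar A) = match j with inl i => i \in A | inr i => i \notin A end.
Proof. by rewrite inE. Qed.

Lemma bar_inj : injective (@bar n).
Proof.
move=> A B eAB; apply/setP=> i.
by have := congr1 (fun X : {set J n} => inl i \in X) eAB; rewrite /= !in_bar.
Qed.

Lemma bar_setC A : bar (~: A) = ~: bar A.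
Proof. by apply/setP=> -[] i; rewrite !inE ?negbK. Qed.

Lemma in_bar_toggle A i j :
  (j \in bar (toggle A i)) = if base j == i then j \notin bar A else j \in bar A.
Proof.
by case: j => j; rewrite /= !in_bar in_toggle; case: (j \in A); case: (j == i).
Qed.

Lemma base_star j : base (star j) = base j.
Proof. by case: j. Qed.

Lemma in_bar_star A j : (star j \in bar A) = (j \notin bar A).
Proof. by case: j => j; rewrite /= !in_bar ?negbK. Qed.

Lemma in_star_pair j k : (k \in [set j; star j]) = (base k == base j).
Proof. by case: j k => j [] k; rewrite !inE /= ?orbF. Qed.

Lemma symd_bar_star A j : symd (bar A) [set j; star j] = bar (toggle A (base j)).
Proof.
apply/setP=> k; rewrite in_symd in_bar_toggle in_star_pair.
by case: (base k == base j); rewrite ?addbT ?addbF.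
Qed.

Lemma notin_bar_eq A j k :
  base j = base k -> j \notin bar A -> k \notin bar A -> j = k.
Proof.
by case: j k => j [] k /= <-; rewrite !in_bar ?negbK //; case: (_ \in A).
Qed.

Definition offbar A i : J n := if i \in A then inr i else inl i.

Lemma base_offbar A i : base (offbar A i) = i.
Proof. by rewrite /offbar; case: ifP. Qed.

Lemma offbar_notin_bar A i : offbar A i \notin bar A.
Proof. by rewrite /offbar; case: ifP => h; rewrite in_bar ?h. Qed.

Lemma offbar_base A j : j \notin bar A -> j = offbar A (base j).
Proof.
by move=> jA; apply: (notin_bar_eq (A := A)); rewrite ?base_offbar ?offbar_notin_bar.
Qed.

Lemma in_bar_offbar A B i : (offbar A i \in bar B) = (i \in A) (+) (i \in B).
Proof. by rewrite /offbar; case: (i \in A); rewrite in_bar //= addbC addbT. Qed.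

End BarSets.

Section TropicalVectors.
Variables (R : realType) (n : nat).
Implicit Types (v x : tvec R n).

Lemma in_tsupp v j : (j \in tsupp v) = (v j != None).
Proof. by rewrite inE. Qed.

Lemma shiftE v l j : shift v l j = tadd (v j) (Some l).
Proof. by rewrite ffunE. Qed.

Lemma tsupp_shift v l : tsupp (shift v l) = tsupp v.
Proof. by apply/setP=> j; rewrite !in_tsupp shiftE; case: (v j). Qed.

Lemma shift0 v : shift v 0 = v.
Proof. by apply/ffunP=> j; rewrite shiftE; case: (v j) => //= a; rewrite addr0. Qed.

Lemma shift_shift v l l' : shift (shift v l) l' = shift v (l + l').
Proof. by apply/ffunP=> j; rewrite !shiftE; case: (v j) => //= a; rewrite addrA. Qed.

Lemma taddACA (a b : trop R) l l' :
  tadd (tadd a (Some l)) (tadd b (Some l')) = tadd (tadd a b) (Some (l + l')).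
Proof. by case: a => [a|]; case: b => [b|] //=; rewrite addrACA. Qed.

End TropicalVectors.

Section CircuitsOfWick.
Variables (R : realType) (n : nat) (p : {ffun {set 'I_n} -> trop R}).
Implicit Types (A B C : {set 'I_n}) (x y : tvec R n).

Lemma barp_bar A : barp p (bar A) = p A.
Proof.
rewrite /barp; case: pickP => [B /eqP/bar_inj -> //|].
by move/(_ A); rewrite eqxx.
Qed.

Lemma cTE A j : cT p A j = if j \in bar A then p (toggle A (base j)) else None.
Proof. by rewrite ffunE symd_bar_star barp_bar. Qed.

Lemma cTstarE A j :
  cTstar p A j = if j \notin bar A then p (toggle A (base j)) else None.
Proof. by rewrite ffunE symd_bar_star barp_bar. Qed.

Lemma in_tsupp_cTstar A j :
  (j \in tsupp (cTstar p A)) = (j \notin bar A) && (p (toggle A (base j)) != None).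
Proof. by rewrite in_tsupp cTstarE; case: ifP. Qed.

Lemma Cperp_cT x A j : in_Cperp p x -> cT p A j != None -> torth x (cT p A).
Proof.
move=> xperp cAj; rewrite -[cT p A]shift0; apply: xperp; split.
  by exists A, 0.
by apply/set0Pn; exists j; rewrite tsupp_shift in_tsupp.
Qed.

(* A circuit meeting [supp x] in a single coordinate cannot be orthogonal to [x]. *)
Lemma Cperp_dependent_dual x :
  in_Cperp p x -> tsupp x != set0 -> dependent_dual p (tsupp x).
Proof.
move=> xperp /set0Pn[j jx] B; rewrite inE => pB.
rewrite bar_setC => /subsetP xB.
have xnB k : k \in tsupp x -> k \notin bar B by move/xB; rewrite inE.
pose A := toggle B (base j).
have cAj : cT p A j = p B by rewrite cTE in_bar_toggle eqxx xnB // toggleK.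
have offj k : true -> k != j -> tadd (x k) (cT p A k) = None.
  move=> _ kj; case xk: (x k) => [a|] //.
  have kx : k \in tsupp x by rewrite in_tsupp xk.
  rewrite cTE in_bar_toggle (negbTE (xnB k kx)); case: eqP => // ekj.
  by move: kj; rewrite (notin_bar_eq ekj (xnB k kx) (xnB j jx)) eqxx.
have := min_twice_or_inf_supp1 isT offj (Cperp_cT xperp (j := j) _).
rewrite cAj; move: jx; rewrite in_tsupp.
by case: (x j) => // a _; case: (p B) pB => // b _ /(_ isT).
Qed.

(* Orthogonality of [cTstar p A] and [cT p B] is the Wick relation for [A] and [B]. *)
Lemma cocircuit_cocycle A l : wick p -> cocycle p (shift (cTstar p A) l).
Proof.
move=> pwick; split.
  move=> j; rewrite tsupp_shift !in_tsupp !cTstarE in_bar_star negbK.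
  by case: (j \in bar A).
move=> c [[B [l' ->]] _].
apply: (min_twice_or_inf_reindex (P := fun i => i \in symd A B) (phi := offbar A)
  (psi := @base n) (c := l + l') _ _ _ (pwick A B)).
- by move=> i _; rewrite base_offbar.
- move=> i iAB; rewrite !shiftE cTstarE cTE offbar_notin_bar in_bar_offbar.
  by rewrite -in_symd iAB base_offbar taddACA.
- move=> k; rewrite !shiftE cTstarE cTE.
  case: ifP => // kA; case: ifP => kB; last by case: (p _).
  move=> _; split; last exact: offbar_base.
  by move: kB; rewrite (offbar_base kA) in_bar_offbar -in_symd base_offbar.
Qed.

(* The circuit of [A] toggled in [base j] and [base k] meets [tsupp x] in [j] and [k] only. *)
Lemma Cperp_cTstar_cross x A j k :
  in_Cperp p x -> tsupp x = tsupp (cTstar p A) ->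
  j \in tsupp x -> k \in tsupp x ->
  tadd (x j) (cTstar p A k) = tadd (x k) (cTstar p A j).
Proof.
move=> xperp xA jx kx.
have offA m : m \in tsupp x -> m \notin bar A.
  by rewrite xA in_tsupp_cTstar => /andP[].
case: (base k =P base j) => [ekj|/eqP nkj].
  by rewrite (notin_bar_eq ekj (offA k kx) (offA j jx)).
have njk : base j != base k by rewrite eq_sym.
pose D := toggle (toggle A (base j)) (base k).
have cDj : cT p D j = cTstar p A k.
  rewrite cTE !in_bar_toggle eqxx (negbTE njk) (offA j jx) toggleC toggleK.
  by rewrite cTstarE (offA k kx).
have cDk : cT p D k = cTstar p A j.
  rewrite cTE !in_bar_toggle eqxx (negbTE nkj) (offA k kx) toggleK.
  by rewrite cTstarE (offA j jx).
have offD m : true -> m != j -> m != k -> tadd (x m) (cT p D m) = None.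
  move=> _ mj mk; case xm: (x m) => [a|] //.
  have mx : m \in tsupp x by rewrite in_tsupp xm.
  rewrite cTE !in_bar_toggle.
  case: (base m =P base k) => [emk|_].
    by move: mk; rewrite (notin_bar_eq emk (offA m mx) (offA k kx)) eqxx.
  case: (base m =P base j) => [emj|_]; last by rewrite (negbTE (offA m mx)).
  by move: mj; rewrite (notin_bar_eq emj (offA m mx) (offA j jx)) eqxx.
have jk : j != k by apply: contraNneq nkj => ->.
have cDj_supp : cT p D j != None by rewrite cDj -in_tsupp -xA.
have := min_twice_or_inf_supp2 jk isT isT offD (Cperp_cT xperp cDj_supp).
by rewrite cDj cDk.
Qed.

Lemma Cperp_cTstar_shift x A :
  in_Cperp p x -> tsupp x = tsupp (cTstar p A) ->
  exists l, x = shift (cTstar p A) l.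
Proof.
move=> xperp xA.
suff [l onx] : exists l, forall k, k \in tsupp x -> x k = tadd (cTstar p A k) (Some l).
  exists l; apply/ffunP => k; rewrite shiftE.
  have [kx|kx] := boolP (k \in tsupp x); first exact: onx.
  have kA : k \notin tsupp (cTstar p A) by rewrite -xA.
  by move: kx kA; rewrite !in_tsupp !negbK => /eqP -> /eqP ->.
have [x0|[j jx]] := set_0Vmem (tsupp x); first by exists 0 => k; rewrite x0 inE.
have jA : j \in tsupp (cTstar p A) by rewrite -xA.
move: (jx) jA; rewrite !in_tsupp; case xj: (x j) => [a|] //.
case Aj: (cTstar p A j) => [b|] // _ _.
exists (a - b) => k kx; have kA : k \in tsupp (cTstar p A) by rewrite -xA.
move: kx kA (Cperp_cTstar_cross xperp xA jx kx); rewrite xj Aj !in_tsupp.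
by case: (x k) => [c|] //; case: (cTstar p A k) => [d|] //= _ _ [e]; congr Some; lra.
Qed.

(* A [k] of the cocircuit's support missing from [tsupp x] would make [A] toggled in
   [base k] a basis whose bar meets [tsupp x] in fewer points than [bar B] does. *)
Lemma cTstar_toggle_sub_supp x B j :
  admissible (tsupp x) ->
  (forall C, C \in supp_p p -> #|tsupp x :&: bar B| <= #|tsupp x :&: bar C|)%N ->
  j \in tsupp x :&: bar B ->
  tsupp (cTstar p (toggle B (base j))) \subset tsupp x.
Proof.
move=> xadm Bmin; rewrite in_setI => /andP[jx jB].
have jA : j \notin bar (toggle B (base j)) by rewrite in_bar_toggle eqxx jB.
apply/subsetP => k; rewrite in_tsupp_cTstar => /andP[kA pC].
case: (base k =P base j) => [ekj|/eqP nkj]; first by rewrite (notin_bar_eq ekj kA jA).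
apply: contraT => kx.
have kB : k \notin bar B by move: kA; rewrite in_bar_toggle (negbTE nkj).
have : tsupp x :&: bar (toggle (toggle B (base j)) (base k)) \proper tsupp x :&: bar B.
  apply: (sub_proper_trans _ (properD1 (x := j) _)); last by rewrite in_setI jx jB.
  apply/subsetP => m; rewrite in_setD1 !in_setI => /andP[mx]; rewrite !in_bar_toggle.
  case: (base m =P base k) => [emk|_].
    rewrite emk (negbTE nkj) => mB.
    by move: kx; rewrite -(notin_bar_eq emk mB kB) mx.
  case: (base m =P base j) => [emj mB|nmj mB]; last first.
    by rewrite mx mB !andbT; apply: contra_not_neq nmj => ->.
  have ems : m = star j by apply: (notin_bar_eq (A := B)); rewrite ?base_star ?in_bar_star ?negbK.
  by move: (xadm j jx); rewrite -ems mx.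
by rewrite properEcard ltnNge Bmin ?andbF // inE.
Qed.

Lemma min_cocycle_cocircuit x :
  wick p -> supp_p p != set0 -> cocycle p x -> tsupp x != set0 ->
  (forall y, cocycle p y -> tsupp y != set0 -> ~ tsupp y \proper tsupp x) ->
  cocircuit p x.
Proof.
move=> pwick /set0Pn[B0 B0p] [xadm xperp] x0 xmin.
have [B Bp Bmin] :=
  @arg_minnP _ B0 (fun B => B \in supp_p p) (fun B => #|tsupp x :&: bar B|) B0p.
have /set0Pn[j jxB] : tsupp x :&: bar B != set0.
  rewrite setI_eq0 disjoints_subset -bar_setC.
  by apply/negP; exact: Cperp_dependent_dual xperp x0 B Bp.
set A := toggle B (base j).
have Ax := cTstar_toggle_sub_supp xadm Bmin jxB.
have jA : j \in tsupp (cTstar p A).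
  move: jxB Bp; rewrite in_setI in_tsupp_cTstar in_bar_toggle eqxx toggleK.
  by move=> /andP[_ ->]; rewrite inE.
have xA : tsupp x = tsupp (cTstar p A).
  apply/eqP; rewrite eq_sym eqEsubset Ax /=; apply: contraT => xnA.
  case: (xmin _ (cocircuit_cocycle A 0 pwick)); rewrite tsupp_shift ?properE ?Ax //.
  by apply/set0Pn; exists j.
have [l ->] := Cperp_cTstar_shift xperp xA.
by split; [exists A, l | rewrite tsupp_shift -xA].
Qed.

Lemma cocircuit_supp_dual A j :
  j \notin bar A -> tsupp (cTstar p A) :\ j \subset bar (~: toggle A (base j)).
Proof.
move=> jA; apply/subsetP => k; rewrite in_setD1 in_tsupp_cTstar => /and3P[kj kA _].
rewrite bar_setC inE in_bar_toggle; case: eqP => [ekj|//].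
by move: kj; rewrite (notin_bar_eq ekj kA jA) eqxx.
Qed.

Lemma cocircuit_min_cocycle c y :
  cocircuit p c -> cocycle p y -> tsupp y != set0 -> ~ tsupp y \proper tsupp c.
Proof.
move=> [[A [l ->]] _] [_ yperp] y0; rewrite tsupp_shift => /properP[yA [j jA jy]].
move: (jA); rewrite in_tsupp_cTstar => /andP[jnA pj].
apply: (Cperp_dependent_dual yperp y0 (B := toggle A (base j))); first by rewrite inE.
by apply: subset_trans (cocircuit_supp_dual jnA); rewrite subsetD1 yA jy.
Qed.

Lemma cocircuit_supp_eq_shift c1 c2 :
  wick p -> cocircuit p c1 -> cocircuit p c2 -> tsupp c1 = tsupp c2 ->
  exists l, c1 = shift c2 l.
Proof.
move=> pwick [[A [l1 ->]] _] [[B [l2 ->]] _]; rewrite !tsupp_shift => AB.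
have [l ->] : exists l, shift (cTstar p A) l1 = shift (cTstar p B) l.
  by apply: Cperp_cTstar_shift; [exact: (cocircuit_cocycle A l1 pwick).2 | rewrite tsupp_shift].
by exists (l - l2); rewrite shift_shift addrC subrK.
Qed.

End CircuitsOfWick.

Unset Implicit Arguments.

Theorem proposition6p6 (R : realType) (n : nat) (p : {ffun {set 'I_n} -> trop R}) :
  wick p -> supp_p p != set0 ->
  [/\ (* (i) *)
      (forall x : tvec R n, in_Cperp p x -> tsupp x != set0 ->
         dependent_dual p (tsupp x)),
      (* (ii) *)
      (forall x : tvec R n,
         (cocycle p x /\ tsupp x != set0 /\
          (forall y : tvec R n, cocycle p y -> tsupp y != set0 ->
             ~ (tsupp y \proper tsupp x)))
         <-> cocircuit p x)
    & (* (iii) *)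
      (forall c1 c2 : tvec R n, cocircuit p c1 -> cocircuit p c2 ->
         tsupp c1 = tsupp c2 -> exists l : R, c1 = shift c2 l)].
Proof.
move=> pwick p0; split.
- by move=> x; exact: Cperp_dependent_dual.
- move=> x; split=> [[xco [x0 xmin]]|xcc]; first exact: min_cocycle_cocircuit.
  split; last split; last by move=> y; exact: cocircuit_min_cocycle.
    by have [[A [l ->]] _] := xcc; exact: cocircuit_cocycle.
  by case: xcc.
- by move=> c1 c2; exact: cocircuit_supp_eq_shift.
Qed.
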